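(* Let $P$ be an isothetic drawing of the Horton set of $n=2^k$ points with tree $T$, and let $1\le l\le k-1$. Let $P'$ be the result of pruning the $l$-th level of $T$ (see context). Then: (1) $P'$ is an isothetic drawing of the Horton set of $n/2$ points. (2) Suppose $l\le k-3$, and let $T'$ be the tree associated to $P'$. Let $Q'$ be a vertex of the $l'$-th level of $T'$ for some $l'>l$. Then there exists a vertex $Q$ in the $(l'+1)$-th level of $T$ with $Q'\subseteq Q$; moreover, whenever $S(Q')$ is defined (i.e. $Q'$ is not the root of $T'$ and has more than two points), $S(Q')\subseteq S(Q)$.
   Context: For a finite set $S$ of points in the plane with pairwise distinct $x$-coordinates, list its points in increasing order of $x$-coordinate as $p_0,\dots,p_{|S|-1}$ and set $S_{\mathrm{even}}=\{p_0,p_2,\dots\}$, $S_{\mathrm{odd}}=\{p_1,p_3,\dots\}$. For point sets $X,Y$, $X$ is high above $Y$ if every line through two points of $X$ lies strictly above every point of $Y$ and every line through two points of $Y$ lies strictly below every point of $X$. A Horton set of $2^k$ points is defined recursively: a set $H$ of $2^k$ points, no three collinear, with pairwise distinct $x$-coordinates, such that for $k=0$ it is a single point and for $k\ge1$ both $H_{\mathrm{even}}$ and $H_{\mathrm{odd}}$ are Horton sets of $2^{k-1}$ points and $H_{\mathrm{odd}}$ is high above $H_{\mathrm{even}}$. An isothetic drawing of the Horton set of $n=2^k$ points is a Horton set of $n$ points all of whose points have integer coordinates. For such a $P$, the tree $T$ is the complete rooted binary tree with root $P$ in which every vertex $Q$ with at least two points has left child $Q_{\mathrm{even}}$ and right child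 $Q_{\mathrm{odd}}$; the $i$-th level of $T$ is the set of its vertices consisting of exactly $2^i$ points. Pruning the $l$-th level of $T$ means removing from $P$ all points belonging to the vertices of the $l$-th level that are left children of their parent, or alternatively all points belonging to the vertices of the $l$-th level that are right children of their parent (either choice). For a non-root vertex $Q$ with more than two points, $S(Q)$ denotes the right child of $Q$ if $Q$ is the left child of its parent, and the left child of $Q$ otherwise (and analogously in $T'$). *)

From HB Require Import structures.
From mathcomp Require Import all_boot all_order all_algebra.
Set Implicit Arguments. Unset Strict Implicit. Unset Printing Implicit Defensive.
Import Order.TTheory GRing.Theory Num.Theory.
Local Open Scope ring_scope.

Definition pt := (int * int)%type.

(* finite point sets are represented by duplicate-free sequences; set
   operations are understood extensionally (via membership) *)

(* orientation: for p.1 < q.1, cross p q r > 0 iff r lies strictly above the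
   line through p and q, and < 0 iff r lies strictly below it *)
Definition cross (p q r : pt) : int :=
  (q.1 - p.1) * (r.2 - p.2) - (q.2 - p.2) * (r.1 - p.1).

Definition distinct_x (S : seq pt) : bool := uniq (map fst S).

Definition no_three_collinear (S : seq pt) : Prop :=
  forall p q r, p \in S -> q \in S -> r \in S ->
    p != q -> q != r -> p != r -> cross p q r != 0.

Definition high_above (X Y : seq pt) : Prop :=
  (forall p q r, p \in X -> q \in X -> r \in Y -> p.1 < q.1 -> cross p q r < 0) /\
  (forall p q r, p \in Y -> q \in Y -> r \in X -> p.1 < q.1 -> 0 < cross p q r).

Definition xsort (S : seq pt) : seq pt := sort (fun p q : pt => p.1 <= q.1) S.

Fixpoint evens (s : seq pt) : seq pt :=
  match s with
  | x :: _ :: t => x :: evens t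
  | [:: x] => [:: x]
  | [::] => [::]
  end.

Definition S_even (S : seq pt) : seq pt := evens (xsort S).
Definition S_odd (S : seq pt) : seq pt := evens (behead (xsort S)).

Fixpoint horton (k : nat) (H : seq pt) : Prop :=
  [/\ size H = (2 ^ k)%N, uniq H, distinct_x H, no_three_collinear H &
      match k with
      | 0 => True
      | k'.+1 => [/\ horton k' (S_even H), horton k' (S_odd H)
                   & high_above (S_odd H) (S_even H)]
      end].

(* An isothetic drawing of the Horton set of 2^k points: a Horton set of 2^k
   points with integer coordinates (integrality is built into [pt]). *)
Definition isothetic_horton (k : nat) (P : seq pt) : Prop := horton k P.

(* child of a vertex: false = left child (even part), true = right child (odd part) *)
Definition child (c : bool) (Q : seq pt) : seq pt := if c then S_odd Q else S_even Q.

(* vertices of the tree T of P are addressed by root-to-vertex paths;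
   for P of 2^k points, a path of length k - i addresses a vertex of level i *)
Fixpoint vertex (P : seq pt) (b : seq bool) : seq pt :=
  match b with
  | [::] => P
  | c :: b' => vertex (child c P) b'
  end.

(* S(Q) for the (non-root) vertex Q with path b: the right child of Q if Q is
   a left child of its parent, the left child of Q otherwise *)
Definition Svert (P : seq pt) (b : seq bool) : seq pt :=
  vertex P (rcons b (~~ last false b)).

(* Pruning level l of the tree of P (P of 2^k points): remove all points of
   the level-l vertices that are left children (c = false) or all that are
   right children (c = true) of their parents. *)
Definition prune (k l : nat) (c : bool) (P : seq pt) : seq pt :=
  [seq p <- P | ~~ [exists b : (k - l).-tuple bool,
                     (last false b == c) && (p \in vertex P b)]].

(* List a set H by increasing x-coordinate as h_0, h_1, ...; then the vertex of
   its tree with root path b = [b_0; ...; b_(r-1)] consists of the h_i whose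
   index i has binary digits b_0, ..., b_(r-1), least significant first.
   Pruning level l of a set of 2^k points therefore keeps exactly the h_i whose
   digit k-l-1 differs from c. Passing to the even or odd part shifts all digits
   down by one, so it commutes with this pruning, one digit lower. By induction
   every vertex of the pruned tree is the pruning of the vertex of T with the
   same path: it is a Horton set (parts of a high-above pair stay high above)
   and, on the levels above l, it is contained in that vertex of T. This gives
   (2) with Q the vertex of T addressed by the path of Q', and S(Q) likewise. *)
From mathcomp Require Import all_boot all_order all_algebra zify.
Set Implicit Arguments. Unset Strict Implicit. Unset Printing Implicit Defensive.
Import Order.TTheory.

Section Sieve.
Variable T : eqType.

Fixpoint sieve (f : nat -> bool) (s : seq T) : seq T :=
  match s with
  | [::] => [::]
  | x :: s' => let s'' := sieve (fun i => f i.+1) s' in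
               if f 0 then x :: s'' else s''
  end.

Lemma eq_sieve f g s : f =1 g -> sieve f s = sieve g s.
Proof.
elim: s f g => [|x s IHs] f g fg //=.
by rewrite fg (IHs (fun i => f i.+1) (fun i => g i.+1)).
Qed.

Lemma sieve_subseq f s : subseq (sieve f s) s.
Proof.
elim: s f => [|x s IHs] f //=; case: (f 0) => /=; first by rewrite eqxx IHs.
exact: subseq_trans (IHs _) (subseq_cons _ _).
Qed.

Lemma sieve_true s : sieve (fun=> true) s = s.
Proof. by elim: s => //= x s ->. Qed.

Lemma size_sieveC f s : size (sieve f s) + size (sieve (fun i => ~~ f i) s) = size s.
Proof. by elim: s f => [|x s IHs] f //=; case: (f 0); rewrite /= ?addSn ?addnS IHs. Qed.

Lemma sieve_sieve f g s :
  sieve g (sieve f s) = sieve (fun i => f i && g (count f (iota 0 i))) s.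
Proof.
have count_iota1 (p : pred nat) i : count p (iota 1 i) = count (p \o succn) (iota 0 i).
  by rewrite -add1n iotaDl count_map.
elim: s f g => [|x s IHs] f g //=.
case: (f 0) => /=; first case: (g 0) => /=.
- by rewrite IHs; congr (_ :: _); apply: eq_sieve => i; rewrite count_iota1 add1n.
- by rewrite IHs; apply: eq_sieve => i; rewrite count_iota1 add1n.
- by rewrite IHs; apply: eq_sieve => i; rewrite count_iota1.
Qed.

Lemma mem_sieve f s x : uniq s -> (x \in sieve f s) = (x \in s) && f (index x s).
Proof.
elim: s f => [|y s IHs] f //= /andP[ys us].
rewrite in_cons; have [->|xy] /= := eqVneq x y.
  case: (f 0); rewrite ?in_cons ?eqxx //.
  by apply/negP => /(mem_subseq (sieve_subseq _ _)); rewrite (negPf ys).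
by case: (f 0); rewrite ?in_cons ?(negPf xy) /= IHs.
Qed.

Lemma filter_index f s : uniq s -> [seq x <- s | f (index x s)] = sieve f s.
Proof.
elim: s f => [|y s IHs] f //= /andP[ys us].
rewrite eqxx -(IHs (fun i => f i.+1)) //.
have -> // : [seq x <- s | f (if y == x then 0 else (index x s).+1)] =
             [seq x <- s | f (index x s).+1].
apply: eq_in_filter => x xs.
by have -> : (y == x) = false by apply: contraNF ys => /eqP ->.
Qed.

Lemma sorted_sieve (leT : rel T) f s :
  transitive leT -> sorted leT s -> sorted leT (sieve f s).
Proof. by move=> leT_tr; apply: subseq_sorted (sieve_subseq f s). Qed.

End Sieve.

Definition bitn (m i : nat) : bool := odd (i %/ 2 ^ m).

Lemma bitn0 i : bitn 0 i = odd i.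
Proof. by rewrite /bitn expn0 divn1. Qed.

Lemma bitnS m i : bitn m.+1 i = bitn m i./2.
Proof. by rewrite /bitn expnS divnMA divn2. Qed.

Fixpoint bits (n i : nat) : seq bool :=
  if n is n'.+1 then odd i :: bits n' i./2 else [::].

Lemma size_bits n i : size (bits n i) = n.
Proof. by elim: n i => //= n IHn i; rewrite IHn. Qed.

Lemma last_bits n i x : last x (bits n.+1 i) = bitn n i.
Proof. by elim: n i x => [|n IHn] i x; rewrite ?bitn0 // bitnS -(IHn _ (odd i)). Qed.

Lemma exists_bits m c i :
  [exists b : m.+1.-tuple bool, (last false b == c) && (bits m.+1 i == b)] =
  (bitn m i == c).
Proof.
apply/existsP/idP => [[b /andP[/eqP <- /eqP ib]]|bi].
  by rewrite -(last_bits m i false) ib.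
have sz : size (bits m.+1 i) == m.+1 by rewrite size_bits.
by exists (Tuple sz); rewrite last_bits bi !eqxx.
Qed.

Lemma count_odd_eq d i :
  odd i = d -> count (fun j => odd j == d) (iota 0 i) = i./2.
Proof.
have count_eq n : count (fun j => odd j == d) (iota 0 n) = (n + ~~ d)./2.
  elim: n => [|n IHn]; first by case: d.
  rewrite -addn1 iotaD count_cat {}IHn /= addn0 add0n addn1 addSn.
  by rewrite -uphalfE uphalf_half oddD addnC; case: d; case: (odd n).
move=> oi; rewrite count_eq -oi; have [_|ei] := boolP (odd i); first by rewrite addn0.
by rewrite addn1 -uphalfE uphalf_half (negPf ei).
Qed.

(* Indices sharing digit m+1 come in runs of even length 2^(m+1) starting at
   even positions, so keeping or dropping a whole run preserves parity. *)
Lemma odd_count_bitn m c i :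
  odd (count (fun j => bitn m.+1 j != c) (iota 0 i)) = (bitn m.+1 i != c) && odd i.
Proof.
elim: i => [|i IHi]; first by rewrite andbF.
rewrite -[i.+1]addn1 iotaD count_cat oddD IHi /= addn0 add0n addn1 oddb.
case oi: (odd i); rewrite /= ?oi ?andbT ?andbF ?addbb ?addFb //.
rewrite /bitn divnS ?expn_gt0 //.
suff -> : (2 ^ m.+1 %| i.+1) = false by [].
apply: contraFF oi; rewrite expnS => /(dvdn_trans (dvdn_mulr _ (dvdnn 2))).
by rewrite dvdn2 /= negbK.
Qed.

Definition leX : rel pt := fun p q => (p.1 <= q.1)%R.

Lemma leX_total : total leX.
Proof. by move=> p q; apply: le_total. Qed.

Lemma leX_trans : transitive leX.
Proof. by move=> p q r; apply: le_trans. Qed.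

Lemma sorted_xsort H : sorted leX (xsort H).
Proof. exact: sort_sorted leX_total H. Qed.

Lemma xsort_id t : sorted leX t -> xsort t = t.
Proof. exact: sorted_sort leX_trans t. Qed.

Lemma perm_xsort H : perm_eq (xsort H) H.
Proof. by rewrite perm_sort. Qed.

Lemma evens_sieve u :
  evens u = sieve (fun i => ~~ odd i) u /\ evens (behead u) = sieve odd u.
Proof.
elim: u => [|x u [IHe IHo]] //; split; last by rewrite IHe.
have -> : evens (x :: u) = x :: evens (behead u) by case: u {IHe IHo}.
by rewrite IHo /=; congr (_ :: _); apply: eq_sieve => i; rewrite negbK.
Qed.

Lemma size_S_even_odd H : size (S_even H) + size (S_odd H) = size H.
Proof.
rewrite /S_even /S_odd; have [-> ->] := evens_sieve (xsort H).
by rewrite addnC (size_sieveC odd) size_sort.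
Qed.

Lemma child_sieve d t : sorted leX t -> child d t = sieve (fun i => odd i == d) t.
Proof.
move=> st; rewrite /child /S_odd /S_even xsort_id //.
have [-> ->] := evens_sieve t.
by case: d; apply: eq_sieve => i; case: (odd i).
Qed.

Lemma child_xsort d H : child d (xsort H) = child d H.
Proof. by rewrite /child /S_odd /S_even xsort_id ?sorted_xsort. Qed.

Lemma sorted_child d H : sorted leX (child d H).
Proof.
rewrite -child_xsort child_sieve ?sorted_xsort //.
by apply: sorted_sieve; [apply: leX_trans | apply: sorted_xsort].
Qed.

Lemma vertex_xsort H b : vertex H b =i vertex (xsort H) b.
Proof.
case: b => [|d b] x /=; first by rewrite (perm_mem (perm_xsort H)).
by rewrite child_xsort.
Qed.

Lemma vertex_sieve b t :
  sorted leX t -> vertex t b = sieve (fun i => bits (size b) i == b) t.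
Proof.
elim: b t => [|d b IHb] t st /=; first exact/esym/sieve_true.
rewrite IHb ?sorted_child // child_sieve // sieve_sieve; apply: eq_sieve => i.
rewrite eqseq_cons; case: (eqVneq (odd i) d) => [oi|_] //=.
by rewrite count_odd_eq.
Qed.

Definition prune_bit (m : nat) (c : bool) : seq pt -> seq pt :=
  sieve (fun i => bitn m i != c).

Lemma sorted_prune_bit m c t : sorted leX t -> sorted leX (prune_bit m c t).
Proof. exact/sorted_sieve/leX_trans. Qed.

Lemma child_prune_bit d m c t :
  sorted leX t -> child d (prune_bit m.+1 c t) = prune_bit m c (child d t).
Proof.
move=> st; rewrite !child_sieve ?sorted_prune_bit // /prune_bit !sieve_sieve.
apply: eq_sieve => i; rewrite odd_count_bitn.
case: (eqVneq (odd i) d) => [oi|/negPf noi].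
  by rewrite count_odd_eq // -bitnS oi; case: (_ != c); rewrite /= ?eqxx.
by case: (_ != c); rewrite /= ?noi.
Qed.

Lemma vertex_prune_bit_sub b m c t : sorted leX t -> size b <= m ->
  {subset vertex (prune_bit m c t) b <= vertex t b}.
Proof.
elim: b m t => [|d b IHb] [|m] t st //= bm; try exact: mem_subseq (sieve_subseq _ _).
by rewrite child_prune_bit //; apply: IHb; rewrite ?sorted_child.
Qed.

Lemma high_above_sub X Y X' Y' : {subset X' <= X} -> {subset Y' <= Y} ->
  high_above X Y -> high_above X' Y'.
Proof.
move=> sX sY [above below]; split=> p q r pX qX rY.
  by apply: above; [apply: sX | apply: sX | apply: sY].
by apply: below; [apply: sY | apply: sY | apply: sX].
Qed.

Lemma horton_size j H : horton j H -> size H = 2 ^ j.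
Proof. by case: j => [|j] []. Qed.

Lemma horton_child d j H : horton j.+1 H -> horton j (child d H).
Proof. by case=> _ _ _ _ []; case: d. Qed.

Lemma horton_xsort j H : horton j (xsort H) <-> horton j H.
Proof.
have transfer H1 H2 : perm_eq H1 H2 -> xsort H1 = xsort H2 ->
    horton j H1 -> horton j H2.
  move=> pH sH; case: j => [|j] [sz uH dH nH children];
  (split; [ by rewrite -(perm_size pH)
          | by rewrite -(perm_uniq pH)
          | by rewrite /distinct_x -(perm_uniq (perm_map fst pH))
          | by move=> p q r; rewrite -!(perm_mem pH); apply: nH
          | by [] || by rewrite /S_even /S_odd -sH ]).
by split; apply: transfer;
  rewrite ?perm_xsort 1?perm_sym ?perm_xsort ?(xsort_id (sorted_xsort H)).
Qed.

Lemma horton_prune_bit j m c t : sorted leX t -> horton j.+1 t -> m < j ->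
  horton j (prune_bit m c t).
Proof.
elim: m j t => [|m IHm] j t st ht mj.
  rewrite (_ : prune_bit 0 c t = child (~~ c) t); first exact: horton_child.
  rewrite child_sieve //; apply: eq_sieve => i.
  by rewrite bitn0; case: c; case: (odd i).
case: j mj ht => // j mj ht.
have hc d : horton j (prune_bit m c (child d t)).
  by apply: IHm; [apply: sorted_child | apply: horton_child | ].
have che : S_even (prune_bit m.+1 c t) = prune_bit m c (S_even t).
  exact: (child_prune_bit false m c st).
have cho : S_odd (prune_bit m.+1 c t) = prune_bit m c (S_odd t).
  exact: (child_prune_bit true m c st).
have sub : subseq (prune_bit m.+1 c t) t by apply: sieve_subseq.
case: ht => _ uH dH nH [_ _ ha]; split.
- rewrite -size_S_even_odd che cho (horton_size (hc false)) (horton_size (hc true)).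
  by rewrite addnn -mul2n -expnS.
- exact: subseq_uniq sub uH.
- exact: subseq_uniq (map_subseq fst sub) dH.
- move=> p q r /(mem_subseq sub) pt_in /(mem_subseq sub) qt_in /(mem_subseq sub) rt_in.
  exact: nH.
- rewrite che cho; split; [exact: hc false | exact: hc true |].
  by apply: high_above_sub ha => x; apply: mem_subseq; apply: sieve_subseq.
Qed.

Lemma xsort_filter (q : pred pt) H : xsort (filter q H) = filter q (xsort H).
Proof. exact/esym/filter_sort/leX_trans/leX_total. Qed.

Lemma xsort_prune k l c P m : uniq P -> k - l = m.+1 ->
  xsort (prune k l c P) = prune_bit m c (xsort P).
Proof.
move=> uP klm; have us : uniq (xsort P) by rewrite sort_uniq.
have -> : prune k l c P = [seq p <- P | bitn m (index p (xsort P)) != c].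
  rewrite /prune klm; apply: eq_in_filter => p pP; congr negb.
  rewrite -exists_bits; apply: eq_existsb => b; congr andb.
  rewrite vertex_xsort vertex_sieve ?sorted_xsort // mem_sieve //.
  by rewrite (perm_mem (perm_xsort P)) pP size_tuple.
by rewrite xsort_filter; apply: filter_index.
Qed.

Lemma vertex_prune_sub k l c P m b : uniq P -> k - l = m.+1 -> size b <= m ->
  {subset vertex (prune k l c P) b <= vertex P b}.
Proof.
move=> uP klm bm x; rewrite (vertex_xsort P) vertex_xsort (xsort_prune c uP klm).
exact: vertex_prune_bit_sub (sorted_xsort P) bm x.
Qed.

Theorem lemma4 (k l : nat) (P : seq pt) (c : bool) :
  isothetic_horton k P -> (1 <= l)%N -> (l <= k - 1)%N ->
  let P' := prune k l c P in
  isothetic_horton (k - 1) P' /\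
  ((l <= k - 3)%N ->
   forall (l' : nat) (b' : seq bool),
     (l < l')%N -> (l' <= k - 1)%N -> size b' = ((k - 1) - l')%N ->
     exists b : seq bool,
       [/\ size b = (k - l'.+1)%N,
           {subset vertex P' b' <= vertex P b} &
           ((0 < size b')%N -> (2 < 2 ^ l')%N ->
              {subset Svert P' b' <= Svert P b})]).
Proof.
move=> hP l_gt0 lk P'; rewrite /isothetic_horton /P' in hP *; clear P'.
have uP : uniq P by case: k hP {lk} => [|k] [].
have klm : k - l = (k - l - 1).+1 by lia.
split.
  apply/horton_xsort; rewrite (xsort_prune c uP klm).
  apply: horton_prune_bit; [exact: sorted_xsort | | lia].
  by apply/horton_xsort; rewrite (_ : (k - 1).+1 = k) //; lia.
(* Q is the vertex of T with the same path as Q'. *)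
move=> _ l' b' ll' l'k sb; exists b'.
have bm : size b' <= k - l - 1 by lia.
split; first lia; first exact: vertex_prune_sub uP klm bm.
move=> _ _; have bm' : size (rcons b' (~~ last false b')) <= k - l - 1.
  by rewrite size_rcons; lia.
exact: vertex_prune_sub uP klm bm'.
Qed.
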